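(* There exists an $S(3,K_4^{(3)}+e,v)$ for each $v\in\{10,12,15\}$.
   Context: $K_4^{(3)}+e$ denotes the 3-uniform hypergraph with vertex set $\{1,2,3,4,5\}$ and edge set $\{\{1,2,3\},\{1,2,4\},\{1,3,4\},\{2,3,4\},\{3,4,5\}\}$. An $S(3,K_4^{(3)}+e,v)$ is a collection of 3-uniform hypergraphs (blocks) on subsets of a $v$-set $X$, each isomorphic to $K_4^{(3)}+e$, whose edge sets partition the set of all 3-subsets of $X$. *)

From mathcomp Require Import all_boot.
Set Implicit Arguments. Unset Strict Implicit. Unset Printing Implicit Defensive.

(* Vertices of K_4^(3)+e: 1..5 are encoded as 0..4 in 'I_5. *)
Definition v5 (k : nat) : 'I_5 := inord k.

Definition K4e_edges : {set {set 'I_5}} :=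
  [set [set v5 0; v5 1; v5 2]; [set v5 0; v5 1; v5 3]; [set v5 0; v5 2; v5 3];
       [set v5 1; v5 2; v5 3]; [set v5 2; v5 3; v5 4]].

(* A block on the point set X = 'I_v is given by an injective labelling
   f : 'I_5 -> 'I_v of the vertices of K_4^(3)+e; the block is the image
   hypergraph, isomorphic to K_4^(3)+e via f. *)
Definition block_edges (v : nat) (f : {ffun 'I_5 -> 'I_v}) : {set {set 'I_v}} :=
  [set [set f x | x in e] | e : {set 'I_5} in K4e_edges].

Definition is_S3_K4e (v : nat) (B : seq {ffun 'I_5 -> 'I_v}) : Prop :=
  (forall f, f \in B -> injective f) /\
  (forall T : {set 'I_v}, #|T| = 3 ->
     count (fun f => T \in block_edges f) B = 1).

From mathcomp Require Import all_boot.

Set Implicit Arguments.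
Unset Strict Implicit.
Unset Printing Implicit Defensive.

(* The designs are exhibited explicitly and verified by computation: a
   3-subset {x, y, z} is an edge of a block iff x, y, z all lie in the image
   of one edge of K_4^(3)+e (both sets have three elements), so the
   partition property reduces to a finite boolean check over ordered triples
   of distinct points.  The designs on 12 and 15 points are cyclic: they are
   generated by a few base blocks under the translations of Z_11 (fixing the
   point 11) and of Z_13 (fixing the points 13 and 14). *)

Lemma card3P (T : finType) (A : {set T}) :
  #|A| = 3 -> exists x y z, [/\ x != y, y != z, x != z & A = [set x; y; z]].
Proof.
move=> cardA; have [x Ax] : exists x, x \in A.
  by apply/set0Pn; rewrite -card_gt0 cardA.
have /eqP/cards2P[y [z [neq_yz defAx]]] : #|A :\ x| = 2.
  by move: cardA; rewrite (cardsD1 x) Ax add1n => -[].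
have /setD1P[neq_yx _] : y \in A :\ x by rewrite defAx !inE eqxx.
have /setD1P[neq_zx _] : z \in A :\ x by rewrite defAx !inE eqxx orbT.
exists x, y, z; split; [by rewrite eq_sym | by [] | by rewrite eq_sym |].
by rewrite -(setD1K Ax) defAx setUA.
Qed.

Lemma cards3_le (T : finType) (a b c : T) : #|[set a; b; c]| <= 3.
Proof. by rewrite -setUA cardsU1 cards2; case: (_ \notin _); case: (b != c). Qed.

Lemma set3_eq_subset (T : finType) (x y z a b c : T) :
  [&& x != y, y != z & x != z] ->
  ([set x; y; z] == [set a; b; c]) =
  [&& x \in [set a; b; c], y \in [set a; b; c] & z \in [set a; b; c]].
Proof.
case/and3P=> neq_xy neq_yz neq_xz.
have card_xyz : #|[set x; y; z]| = 3.
  by rewrite -setUA cardsU1 cards2 !inE negb_or neq_xy neq_xz neq_yz.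
by rewrite eqEcard card_xyz cards3_le andbT !subUset !sub1set andbA.
Qed.

Definition all_triples (m : nat) (P : nat -> nat -> nat -> bool) : bool :=
  all (fun x => all (fun y => all (P x y) (iota 0 m)) (iota 0 m)) (iota 0 m).

Lemma all_triplesP m P : all_triples m P ->
  forall x y z, x < m -> y < m -> z < m -> P x y z.
Proof.
move=> /allP all_x x y z lt_xm lt_ym lt_zm.
have in_iota u : u < m -> u \in iota 0 m by rewrite mem_iota.
have /allP/(_ y (in_iota y lt_ym))/allP := all_x x (in_iota x lt_xm).
by apply; apply: in_iota.
Qed.

Section Verification.

Variable n : nat.

(* Labels are plain [nat]s because the enumerations of finite types are
   locked and do not reduce under [vm_compute]; out-of-range labels would be
   sent to 0 by [inord], which [block_labels_ok] excludes. *)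
Definition block (s : seq nat) : {ffun 'I_5 -> 'I_n.+1} :=
  [ffun i : 'I_5 => inord (nth 0 s i)].

Definition block_labels_ok (s : seq nat) : bool :=
  [&& size s == 5, uniq s & all (fun a => a < n.+1) s].

Definition K4e_edge_indices : seq (seq nat) :=
  [:: [:: 0; 1; 2]; [:: 0; 1; 3]; [:: 0; 2; 3]; [:: 1; 2; 3]; [:: 2; 3; 4]].

Definition covers (s : seq nat) (x y z : nat) : bool :=
  has (fun e => all (fun u => u \in map (nth 0 s) e) [:: x; y; z]) K4e_edge_indices.

Definition S3_K4e_check (L : seq (seq nat)) : bool :=
  all block_labels_ok L &&
  all_triples n.+1 (fun x y z => [|| x == y, y == z, x == z |
                                     count (fun s => covers s x y z) L == 1]).

Lemma block_v5 s k : k < 5 -> block s (v5 k) = inord (nth 0 s k).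
Proof. by move=> lt_k5; rewrite ffunE /v5 inordK. Qed.

Lemma block_inj s : block_labels_ok s -> injective (block s).
Proof.
case/and3P=> /eqP size_s uniq_s /allP labels_lt i j.
rewrite !ffunE => /(congr1 (@nat_of_ord _)); rewrite !inordK ?labels_lt ?mem_nth ?size_s //.
by move/eqP; rewrite nth_uniq ?size_s // => /eqP/val_inj.
Qed.

Lemma mem_block_edges3 s (x y z : 'I_n.+1) :
  block_labels_ok s -> [&& x != y, y != z & x != z] ->
  ([set x; y; z] \in block_edges (block s)) = covers s x y z.
Proof.
case/and3P=> /eqP size_s _ /allP labels_lt distinct_xyz.
have eq_label u k : k < 5 -> (u == block s (v5 k)) = (val u == nth 0 s k).
  by move=> lt_k5; rewrite block_v5 // -val_eqE /= inordK ?labels_lt ?mem_nth ?size_s.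
rewrite /block_edges /K4e_edges !(imsetU, imsetU1, imset_set1) !inE.
by rewrite !set3_eq_subset // !inE !eq_label // /covers /= !inE !andbT orbF !orbA.
Qed.

Lemma S3_K4e_checkP L : S3_K4e_check L -> is_S3_K4e (map block L).
Proof.
case/andP=> /allP labels_ok /all_triplesP covered_once; split.
  by move=> _ /mapP[s /labels_ok s_ok ->]; apply: block_inj.
move=> T /card3P[x [y [z [neq_xy neq_yz neq_xz ->]]]].
have distinct_xyz : [&& x != y, y != z & x != z] by apply/and3P.
have := covered_once x y z (ltn_ord x) (ltn_ord y) (ltn_ord z).
rewrite !val_eqE (negbTE neq_xy) (negbTE neq_yz) (negbTE neq_xz) /=.
move=> /eqP count_xyz; rewrite count_map -[RHS]count_xyz.
by apply: eq_in_count => s /labels_ok s_ok; rewrite /= mem_block_edges3.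
Qed.

End Verification.

Definition shift_mod (m t a : nat) : nat := if a < m then (a + t) %% m else a.

Definition develop (m : nat) (base : seq (seq nat)) : seq (seq nat) :=
  [seq map (shift_mod m t) b | b <- base, t <- iota 0 m].

Definition design10 : seq (seq nat) :=
  [:: [:: 0; 1; 2; 5; 4]; [:: 6; 7; 2; 3; 5]; [:: 5; 6; 2; 9; 4]; [:: 0; 3; 5; 7; 2];
      [:: 4; 9; 5; 8; 2]; [:: 2; 7; 0; 9; 5]; [:: 7; 9; 1; 5; 8]; [:: 1; 6; 3; 5; 9];
      [:: 1; 7; 3; 4; 5]; [:: 2; 8; 1; 4; 5]; [:: 0; 6; 1; 7; 2]; [:: 8; 9; 1; 6; 2];
      [:: 5; 6; 7; 8; 1]; [:: 6; 9; 4; 7; 5]; [:: 0; 8; 4; 7; 2]; [:: 3; 9; 7; 8; 2];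
      [:: 0; 6; 2; 8; 9]; [:: 4; 6; 3; 8; 5]; [:: 1; 3; 0; 8; 5]; [:: 0; 4; 2; 3; 8];
      [:: 0; 5; 4; 6; 2]; [:: 0; 9; 1; 4; 6]; [:: 3; 6; 0; 9; 8]; [:: 1; 2; 3; 9; 4]].

Definition design12 : seq (seq nat) :=
  develop 11 [:: [:: 0; 11; 4; 10; 7]; [:: 0; 2; 1; 9; 11]; [:: 0; 1; 4; 6; 11];
                 [:: 0; 3; 1; 7; 9]].

Definition design15 : seq (seq nat) :=
  develop 13 [:: [:: 0; 3; 7; 13; 14]; [:: 0; 2; 3; 4; 13]; [:: 0; 3; 8; 10; 13];
                 [:: 0; 5; 1; 6; 13]; [:: 0; 14; 9; 10; 3]; [:: 0; 14; 6; 8; 5];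
                 [:: 0; 2; 6; 10; 12]].

Lemma design10_check : S3_K4e_check 9 design10.
Proof. by vm_compute. Qed.

Lemma design12_check : S3_K4e_check 11 design12.
Proof. by vm_compute. Qed.

Lemma design15_check : S3_K4e_check 14 design15.
Proof. by vm_compute. Qed.

Theorem lemma3p2 :
  forall v : nat, v \in [:: 10; 12; 15] ->
    exists B : seq {ffun 'I_5 -> 'I_v}, is_S3_K4e B.
Proof.
move=> v; rewrite !inE => /or3P[] /eqP ->.
- exact: ex_intro _ _ (S3_K4e_checkP design10_check).
- exact: ex_intro _ _ (S3_K4e_checkP design12_check).
- exact: ex_intro _ _ (S3_K4e_checkP design15_check).
Qed.
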